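(* Let $G$ be a connected graph of order $n\geq 9$ with minimum degree $\delta(G)\geq\frac{n+k}{3}$ for some integer $k\geq 3$. Then $prc(G)=\chi'(G)$.
   Context: A path in an edge-coloured graph is a rainbow path if its edges receive pairwise distinct colours. The proper rainbow connection number $prc(G)$ of a connected graph is the minimum number of colours in a proper edge-colouring (adjacent edges get distinct colours) such that every two distinct vertices are joined by a rainbow path. $\chi'(G)$ is the chromatic index. *)

From mathcomp Require Import all_boot.
From Stdlib Require Import ClassicalEpsilon.
Set Implicit Arguments. Unset Strict Implicit. Unset Printing Implicit Defensive.

(* The least natural number satisfying P (arbitrary if none exists). *)
Definition least (P : nat -> Prop) : nat :=
  epsilon (inhabits 0%N) (fun m => P m /\ forall k, P k -> (m <= k)%N).

Section Graphs.
Variable T : finType.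
Variable e : rel T.

Definition simple_graph : Prop := symmetric e /\ irreflexive e.
Definition connected_graph : Prop := forall x y : T, connect e x y.
Definition degree (x : T) : nat := #|[set y | e x y]|.

(* An edge colouring with colours in 'I_m: c x y is the colour of edge xy
   (values on non-edges are irrelevant). It is proper if adjacent edges
   (edges sharing an endpoint) get distinct colours. *)
Definition proper_edge_colouring (m : nat) (c : T -> T -> 'I_m) : Prop :=
  (forall x y, e x y -> c x y = c y x) /\
  (forall x y z, e x y -> e x z -> y != z -> c x y != c x z).

Definition rainbow_path (m : nat) (c : T -> T -> 'I_m) (x y : T) (p : seq T) : Prop :=
  [/\ path e x p, last x p = y, uniq (x :: p) & uniq (pairmap c x p)].

Definition rainbow_connected (m : nat) (c : T -> T -> 'I_m) : Prop :=
  forall x y, x != y -> exists p, rainbow_path c x y p.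

Definition chromatic_index : nat :=
  least (fun m => exists c : T -> T -> 'I_m, proper_edge_colouring c).

Definition prc : nat :=
  least (fun m => exists c : T -> T -> 'I_m,
                    proper_edge_colouring c /\ rainbow_connected c).
End Graphs.

From mathcomp Require Import all_boot zify.
From Stdlib Require Import FunctionalExtensionality PropExtensionality.
Set Implicit Arguments. Unset Strict Implicit. Unset Printing Implicit Defensive.

(* Every proper edge colouring of such a graph is rainbow connected, so both
   minima range over the same colourings. Let u != v. If they are adjacent or
   have a common neighbour, the path of length at most 2 is rainbow because the
   colouring is proper. Otherwise the set R of vertices outside N[u] and N[v]
   has |R| = n - d(u) - d(v) - 2 <= d(x) - 5 for every vertex x, so each
   neighbour of u or v has at least four, and each vertex of R at least six,
   neighbours in N(u) and N(v) together. This leaves room to choose the inner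
   vertices of a u-v path of length 3, 4 or 5 avoiding the few colours already
   used: along an edge between N(u) and N(v), through a vertex of R seeing both
   N(u) and N(v), or, by connectivity, along an edge st inside R with s seeing
   only N(u) and t only N(v). *)

Lemma last_rev_belast (A : Type) (x : A) p : last (last x p) (rev (belast x p)) = x.
Proof. by case: p => [|y p] //=; rewrite rev_cons last_rcons. Qed.

Lemma pairmap_rev (A B : Type) (f : A -> A -> B) x p :
  pairmap f (last x p) (rev (belast x p)) = rev (pairmap (fun a b => f b a) x p).
Proof.
elim: p x => [|y p IHp] x //=.
by rewrite rev_cons -cats1 pairmap_cat last_rev_belast IHp rev_cons cats1.
Qed.

Lemma exists_notin_small_sets (T : finType) (A : {set T}) (Bs : seq {set T}) :
  all (fun B : {set T} => #|B| <= 1) Bs -> size Bs < #|A| ->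
  exists2 x, x \in A & all (fun B : {set T} => x \notin B) Bs.
Proof.
elim: Bs A => [|B Bs IHBs] A /=; first by move=> _ /card_gt0P[x xA]; exists x.
case/andP=> B_le1 Bs_le1 ltA.
have [|x] := IHBs (A :\: B) Bs_le1.
  have := subset_leq_card (subsetIr A B); rewrite cardsD; lia.
by rewrite inE => /andP[xB xA] xBs; exists x; rewrite ?xB.
Qed.

Lemma connect_exit_edge (T : finType) (e : rel T) (S : {set T}) x y :
  connect e x y -> x \in S -> y \notin S -> exists s t, [/\ s \in S, t \notin S & e s t].
Proof.
case/connectP=> p + ->; elim: p x => [|z p IHp] x /=; first by move=> _ ->.
case/andP=> xz zp xS yS; have [zS | zS] := boolP (z \in S); first exact: IHp zS yS.
by exists x, z.
Qed.

Lemma card_set1I (T : finType) (a : T) (A : {set T}) : #|[set a] :&: A| = (a \in A).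
Proof.
have [aA | aA] := boolP (a \in A); first by rewrite (setIidPl _) ?sub1set ?cards1.
by apply/eqP; rewrite cards_eq0 setI_eq0 disjoints1.
Qed.

Section SimpleGraph.
Variables (T : finType) (e : rel T).
Hypotheses (esym : symmetric e) (eirr : irreflexive e).
Hypothesis min_degree : forall x, #|T| + 3 <= 3 * degree e x.

Definition nbhd x := [set y | e x y].
Definition rest u v := ~: (nbhd u :|: nbhd v :|: [set u; v]).
Definition far u v := [&& u != v, ~~ e u v & [disjoint nbhd u & nbhd v]].
Definition cross_free u v := forall a b, e u a -> e v b -> ~~ e a b.

Lemma rest_sym u v : rest u v = rest v u.
Proof. by rewrite /rest (setUC (nbhd u)) (setUC [set u]). Qed.

Lemma in_rest u v x : (x \in rest u v) = [&& ~~ e u x, ~~ e v x, x != u & x != v].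
Proof. by rewrite !inE !negb_or !andbA. Qed.

Lemma far_sym u v : far u v = far v u.
Proof. by rewrite /far eq_sym esym disjoint_sym. Qed.

Lemma farP u v : far u v -> [/\ u != v, ~~ e u v & forall w, e u w -> e v w = false].
Proof.
case/and3P=> uv nuv dis; split=> // w uw.
by have := disjointFr dis; rewrite /nbhd => /(_ w); rewrite !inE; apply.
Qed.

Lemma cross_free_sym u v : cross_free u v -> cross_free v u.
Proof. by move=> cf a b va ub; rewrite esym cf. Qed.

Lemma card_nbhd_le u v x :
  #|nbhd x| + (x \in rest u v) <=
  #|nbhd u :&: nbhd x| + #|nbhd v :&: nbhd x| + e x u + e x v + #|rest u v|.
Proof.
have cover : nbhd x \subset (nbhd u :&: nbhd x) :|: (nbhd v :&: nbhd x)
    :|: ([set u] :&: nbhd x) :|: ([set v] :&: nbhd x) :|: (rest u v :\ x).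
  apply/subsetP => y; rewrite !inE => xy; rewrite xy !andbT.
  have -> : y != x by apply: contraTneq xy => ->; rewrite eirr.
  by case: (e u y); case: (e v y); case: (y == u); case: (y == v).
have := cardsD1 x (rest u v); have := subset_leq_card cover.
rewrite !cardsU !card_set1I !inE; lia.
Qed.

Lemma card_rest_far u v x : far u v -> #|rest u v| + 5 <= #|nbhd x|.
Proof.
case/and3P=> uv nuv dis.
have disUV : [disjoint nbhd u :|: nbhd v & [set u; v]].
  rewrite -setI_eq0; apply/eqP/setP => y; rewrite !inE.
  apply/negbTE/andP => -[/orP[] ey /orP[] /eqP yuv]; subst y;
    by rewrite ?eirr ?(esym v u) ?(negbTE nuv) in ey.
have := cardsC (nbhd u :|: nbhd v :|: [set u; v]).
move: (leq_card_setU (nbhd u :|: nbhd v) [set u; v]).2 (leq_card_setU (nbhd u) (nbhd v)).2.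
rewrite disUV dis cards2 uv => /eqP-> /eqP->.
have := min_degree u; have := min_degree v; have := min_degree x.
rewrite /degree -!/(nbhd _) -/(rest u v); lia.
Qed.

Lemma common_nbrs_rest u v w : far u v -> w \in rest u v ->
  6 <= #|nbhd u :&: nbhd w| + #|nbhd v :&: nbhd w|.
Proof.
move=> far_uv wR; move: (wR); rewrite in_rest => /and4P[uw vw _ _].
have := card_nbhd_le u v w; have := card_rest_far w far_uv.
rewrite wR !(esym w) (negbTE uw) (negbTE vw) /=; lia.
Qed.

Lemma common_nbrs_nbr u v x : far u v -> e u x ->
  4 <= #|nbhd u :&: nbhd x| + #|nbhd v :&: nbhd x|.
Proof.
move=> far_uv ux; have [_ _ nocom] := farP far_uv.
have := card_nbhd_le u v x; have := card_rest_far x far_uv.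
rewrite in_rest ux !(esym x) ux nocom //=; lia.
Qed.

Lemma cross_free_common_nbrs u v a : cross_free u v -> e u a -> nbhd v :&: nbhd a = set0.
Proof.
move=> cf ua; apply/setP => y; rewrite !inE.
by apply/negbTE/andP => -[vy ay]; move: (cf _ _ ua vy); rewrite ay.
Qed.

Section ProperColouring.
Variables (m : nat) (c : T -> T -> 'I_m).
Hypothesis c_proper : proper_edge_colouring e c.

Lemma colour_sym x y : e x y -> c x y = c y x.
Proof. exact: c_proper.1. Qed.

Lemma colour_neq x y z : e x y -> e x z -> y != z -> c x y != c x z.
Proof. exact: c_proper.2. Qed.

Lemma colour_inj x y z : e x y -> e x z -> c x y = c x z -> y = z.
Proof. by move=> xy xz /eqP; apply: contraTeq; apply: colour_neq. Qed.

Lemma colour_adj x y z : e x y -> e y z -> x != z -> c x y != c y z.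
Proof. by move=> xy yz xz; rewrite colour_sym //; apply: colour_neq; rewrite // esym. Qed.

Lemma rainbow_path_rev x y p :
  rainbow_path e c x y p -> rainbow_path e c y x (rev (belast x p)).
Proof.
case=> xp <- xpU cU; split.
- by rewrite rev_path (@eq_path _ _ e) // => a b; rewrite /= esym.
- exact: last_rev_belast.
- by rewrite -rev_rcons -lastI rev_uniq.
- rewrite pairmap_rev rev_uniq; congr uniq: cU.
  by elim: p x xp {xpU} => [|z p IHp] x //= /andP[xz zp]; rewrite IHp // colour_sym.
Qed.

Lemma card_colour_class x g : #|[set y | e x y & c x y == g]| <= 1.
Proof.
apply/card_le1_eqP => y z; rewrite !inE => /andP[xy /eqP cy] /andP[xz /eqP cz].
by apply: colour_inj xz xy _; rewrite cy cz.
Qed.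

Lemma exists_common_nbr_avoiding x y (gx gy : seq 'I_m) :
  size gx + size gy < #|nbhd x :&: nbhd y| ->
  exists z, [/\ e x z, e y z, c x z \notin gx & c y z \notin gy].
Proof.
move=> lt_size.
pose class w g := [set z | e w z & c w z == g].
have [||z] := @exists_notin_small_sets _ (nbhd x :&: nbhd y)
  ([seq class x g | g <- gx] ++ [seq class y g | g <- gy]).
- by apply/allP => B; rewrite mem_cat => /orP[] /mapP[g _ ->]; apply: card_colour_class.
- by rewrite size_cat !size_map.
rewrite !inE all_cat !all_map => /andP[xz yz] /andP[/allP zx /allP zy].
exists z; split => //; apply/negP.
- by move/zx; rewrite /= /class !inE xz eqxx.
- by move/zy; rewrite /= /class !inE yz eqxx.
Qed.

Ltac edge := first [done | by rewrite esym].

Ltac absurd_hyp :=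
  match goal with
  | H : is_true (?x != ?x) |- _ => by rewrite eqxx in H
  | H : is_true (e ?x ?x) |- _ => by rewrite eirr in H
  | H : is_true (~~ ?b), H' : is_true ?b |- _ => by rewrite H' in H
  | H : is_true (~~ e ?x ?y), H' : is_true (e ?y ?x) |- _ => by rewrite esym H' in H
  | N : forall w, is_true (e ?u w) -> e ?v w = false,
    H : is_true (e ?u ?w), H' : is_true (e ?v ?w) |- _ => by rewrite (N _ H) in H'
  | N : forall w, is_true (e ?u w) -> e ?v w = false,
    H : is_true (e ?u ?w), H' : is_true (e ?w ?v) |- _ => by rewrite esym (N _ H) in H'
  | N : forall w, is_true (e ?u w) -> e ?v w = false,
    H : is_true (e ?w ?u), H' : is_true (e ?v ?w) |- _ =>
      by rewrite esym in H; rewrite (N _ H) in H'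
  | N : forall w, is_true (e ?u w) -> e ?v w = false,
    H : is_true (e ?w ?u), H' : is_true (e ?w ?v) |- _ =>
      by rewrite esym in H; rewrite esym (N _ H) in H'
  end.

Ltac rainbow_fact :=
  first [ edge
        | by apply/eqP => E; subst; absurd_hyp
        | lazymatch goal with
          | |- is_true (c ?x ?y != c ?z ?t) =>
            first [ colour_close
                  | rewrite [c x y]colour_sym; [colour_close | edge]
                  | rewrite [c z t]colour_sym; [colour_close | edge]
                  | rewrite [c x y]colour_sym;
                      [rewrite [c z t]colour_sym; [colour_close | edge] | edge] ]
          end ]
with colour_close :=
  first [ done | rewrite eq_sym; done
        | apply: colour_adj; rainbow_fact | apply: colour_neq; rainbow_fact ].

Ltac rainbow :=
  split; rewrite /= ?inE ?negb_or ?andbT;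
  repeat lazymatch goal with |- is_true (_ && _) => apply/andP; split end;
  rainbow_fact.

Lemma rainbow_of_cross_edge u v a0 b0 : far u v -> e u a0 -> e v b0 -> e a0 b0 ->
  exists p, rainbow_path e c u v p.
Proof.
move=> far_uv ua0 vb0 a0b0; have [uv nuv nocom] := farP far_uv.
have := @common_nbrs_nbr v u b0; rewrite far_sym => /(_ far_uv vb0) PQ.
have [P2 | P1] := leqP 2 #|nbhd u :&: nbhd b0|.
  have [a [ua b0a]] := exists_common_nbr_avoiding (gx := [:: c v b0]) (gy := [::]) P2.
  rewrite inE => ca _.
  by exists [:: a; b0; v]; rainbow.
have Q2 : 1 < #|nbhd v :&: nbhd b0| by lia.
have [ca0 | ca0] := eqVneq (c u a0) (c v b0); last by exists [:: a0; b0; v]; rainbow.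
have [b [vb b0b]] := exists_common_nbr_avoiding (gx := [:: c b0 a0]) (gy := [::]) Q2.
rewrite inE => cb _.
have ca0_b0b : c u a0 != c b0 b by rewrite ca0; rainbow_fact.
have ca0_bv : c u a0 != c v b by rewrite ca0; rainbow_fact.
by exists [:: a0; b0; b; v]; rainbow.
Qed.

Lemma rainbow_via_rest_vertex_gt2 u v w : far u v -> cross_free u v -> w \in rest u v ->
  0 < #|nbhd u :&: nbhd w| -> 2 < #|nbhd v :&: nbhd w| -> exists p, rainbow_path e c u v p.
Proof.
move=> far_uv cf wR Pw Qw; have [uv nuv nocom] := farP far_uv.
move: wR; rewrite in_rest => /and4P[uw vw wu wv].
have [a [ua wa _ _]] := exists_common_nbr_avoiding (gx := [::]) (gy := [::]) Pw.
have [b [vb wb]] := exists_common_nbr_avoiding (gx := [:: c w a]) (gy := [:: c u a]) Qw.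
rewrite !inE => cvb cwb.
have [cua | cua] := eqVneq (c u a) (c v b); last by exists [:: a; w; b; v]; rainbow.
have Pa : 3 < #|nbhd u :&: nbhd a|.
  by have := common_nbrs_nbr far_uv ua; rewrite (cross_free_common_nbrs cf ua) cards0 addn0.
have [x [ux ax]] := exists_common_nbr_avoiding (gx := [:: c w a; c w b]) (gy := [:: c w b]) Pa.
rewrite !inE negb_or => /andP[cux_wa cux_wb] cax.
have cux_vb : c u x != c v b by rewrite -cua; rainbow_fact.
have cxa_vb : c x a != c v b by rewrite -cua; rainbow_fact.
by exists [:: x; a; w; b; v]; rainbow.
Qed.

Lemma rainbow_via_rest_vertex u v w : far u v -> cross_free u v -> w \in rest u v ->
  0 < #|nbhd u :&: nbhd w| -> 0 < #|nbhd v :&: nbhd w| -> exists p, rainbow_path e c u v p.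
Proof.
move=> far_uv cf wR Pw Qw; have PQ := common_nbrs_rest far_uv wR.
have [Qw3 | Qw2] := ltnP 2 #|nbhd v :&: nbhd w|; first exact: rainbow_via_rest_vertex_gt2 Qw3.
have [p /rainbow_path_rev vu] : exists p, rainbow_path e c v u p.
  apply: (@rainbow_via_rest_vertex_gt2 v u w) => //; last by lia.
  - by rewrite far_sym.
  - exact: cross_free_sym.
  - by rewrite rest_sym.
by exists (rev (belast v p)).
Qed.

Lemma rainbow_via_rest_edge u v s t : far u v -> s \in rest u v -> t \in rest u v -> e s t ->
  5 < #|nbhd u :&: nbhd s| -> 1 < #|nbhd v :&: nbhd t| -> exists p, rainbow_path e c u v p.
Proof.
move=> far_uv sR tR st Ps Qt; have [uv nuv nocom] := farP far_uv.
move: sR tR; rewrite !in_rest => /and4P[us vs su sv] /and4P[ut vt tu tv].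
have [b [vb tb]] := exists_common_nbr_avoiding (gx := [:: c s t]) (gy := [::]) Qt.
rewrite inE => cvb _.
have [a [ua sa]] :=
  exists_common_nbr_avoiding (gx := [:: c s t; c t b; c v b]) (gy := [:: c t b; c v b]) Ps.
rewrite !inE !negb_or => /and3P[cua_st cua_tb cua_vb] /andP[csa_tb csa_vb].
by exists [:: a; s; t; b; v]; rainbow.
Qed.

Lemma rainbow_far u v : connect e u v -> far u v -> exists p, rainbow_path e c u v p.
Proof.
move=> conn_uv far_uv; have [uv nuv _] := farP far_uv; case/and3P: (far_uv) => _ _ dis.
have [/existsP[a0 /existsP[b0 /and3P[ua0 vb0 a0b0]]] | no_cross] :=
  boolP [exists a0, exists b0, [&& e u a0, e v b0 & e a0 b0]].
  exact: rainbow_of_cross_edge far_uv ua0 vb0 a0b0.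
have cf : cross_free u v.
  move=> a b ua vb; apply: contra no_cross => ab.
  by apply/existsP; exists a; apply/existsP; exists b; rewrite ua vb ab.
(* An edge leaving S ends in a vertex t of R seeing N(v); if t sees no vertex
   of N(u), then its neighbour in S lies in R and sees no vertex of N(v). *)
pose S := [set x | [&& x != v, ~~ e v x & nbhd v :&: nbhd x == set0]].
have uS : u \in S by rewrite inE uv esym nuv setIC setI_eq0 dis.
have vS : v \notin S by rewrite inE eqxx.
have [s [t [+ tS st]]] := connect_exit_edge conn_uv uS vS.
rewrite inE => /and3P[sv vs /eqP Qs0].
have tv : t != v by apply: contraNneq vs => <-; rewrite esym.
have vt : ~~ e v t.
  apply/negP => vt; have : t \in nbhd v :&: nbhd s by rewrite !inE vt.
  by rewrite Qs0 inE.
have Qt : 0 < #|nbhd v :&: nbhd t|.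
  by move: tS; rewrite inE tv vt lt0n cards_eq0.
have ut : ~~ e u t.
  by apply: contraTN Qt => ut; rewrite (cross_free_common_nbrs cf ut) cards0.
have tR : t \in rest u v.
  by rewrite in_rest ut vt tv andbT; apply: contraNneq tS => ->.
have [Pt0 | Pt] := posnP #|nbhd u :&: nbhd t|; last first.
  exact: rainbow_via_rest_vertex far_uv cf tR Pt Qt.
have sR : s \in rest u v.
  rewrite in_rest vs sv andbT; apply/andP; split.
    apply/negP => us; have : s \in nbhd u :&: nbhd t by rewrite !inE us esym.
    by move/eqP: Pt0; rewrite cards_eq0 => /eqP->; rewrite inE.
  by apply: contraNneq ut => <-.
apply: (rainbow_via_rest_edge far_uv sR tR st).
- by have := common_nbrs_rest far_uv sR; rewrite Qs0 cards0 addn0.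
- by have := common_nbrs_rest far_uv tR; rewrite Pt0 add0n => Qt6; apply: leq_trans Qt6.
Qed.

Lemma proper_colouring_rainbow_connected : connected_graph e -> rainbow_connected e c.
Proof.
move=> conn x y xy; have [xy_e | nxy] := boolP (e x y); first by exists [:: y]; rainbow.
have [/set0Pn[w] | /negPn dis] := boolP (nbhd x :&: nbhd y != set0).
  by rewrite !inE => /andP[xw yw]; exists [:: w; y]; rainbow.
by apply: rainbow_far; rewrite // /far xy nxy -setI_eq0.
Qed.

End ProperColouring.
End SimpleGraph.

Theorem proposition5p12 (T : finType) (e : rel T) (k : nat) :
  simple_graph e -> connected_graph e ->
  (9 <= #|T|)%N -> (3 <= k)%N ->
  (forall x : T, (#|T| + k <= 3 * degree e x)%N) ->
  prc e = chromatic_index e.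
Proof.
move=> [esym eirr] conn _ k_ge3 deg.
have min_deg x : #|T| + 3 <= 3 * degree e x by apply: leq_trans (deg x); rewrite leq_add2l.
rewrite /prc /chromatic_index; congr least.
apply: functional_extensionality => m; apply: propositional_extensionality.
split=> [[c [c_proper _]] | [c c_proper]]; exists c => //.
by split=> //; apply: proper_colouring_rainbow_connected.
Qed.
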